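(* In the setting described in the context, assume $\varphi_2^{(\tau)}=\dots=\varphi_{n-1}^{(\tau)}=0$ for all $\tau\in T$ and that each $\varphi_1^{(\tau)}$ depends only on $x_n$ and is a group homomorphism $U_n/U_{n-1}\to U_1$ (i.e. $x_n\mapsto\varphi_1^{(\tau)}(x_n)$ is additive). Then there exists a bi-regular section $\sigma:U_n/U_{n-1}\to U_n$ of the projection $U_n\to U_n/U_{n-1}$ of the form $\sigma(x_nU_{n-1})=(f(x_n),0,\dots,0,x_n)$ with $f\in\mathsf k[\mathrm T]$ additive (i.e. $\delta^1(f)=0$, where $\delta^1(f)(x,y)=f(x)+f(y)-f(x+y)$), such that $\sigma(U_n/U_{n-1})$ is invariant under $T$.
   Context: Let $\mathsf k$ be an algebraically closed field and $G=U\rtimes T$ the semidirect product of an $n$-dimensional connected unipotent algebraic group $U$ by a $1$-dimensional connected torus $T$. Assume $U$ is identified with the affine space $\mathsf k^n$ so that: the subsets $U_i=\{(x_1,\dots,x_n): x_{i+1}=\dots=x_n=0\}$ ($0\le i\le n$) are normal subgroups of $G$; the product is $(x_1,\dots,x_n)(y_1,\dots,y_n)=(x_1+y_1+\psi_1,\ \dots,\ x_{n-1}+y_{n-1}+\psi_{n-1},\ x_n+y_n)$ where $\psi_j\in\mathsf k[x_{j+1},\dots,x_n,y_{j+1},\dots,y_n]$; and each $\tau\in T$ acts on $U$ by the automorphism $(x_1,\dots,x_n)\mapsto(a_\tau^{e_1}x_1+\varphi_1^{(\tau)}(x_2,\dots,x_n),\ \dots,\ a_\tau^{e_{n-1}}x_{n-1}+\varphi^{(\tau)}_{n-1}(x_n),\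 a_\tau^{e_n}x_n)$, where $a_\tau\in\mathsf k^*$ depends bi-regularly on $\tau$, each $\varphi^{(\tau)}_j$ is a morphism (polynomial in $x_{j+1},\dots,x_n$), and the $e_j$ are fixed integers. $U_n/U_{n-1}$ is identified with $\mathsf k$ via the coordinate $x_n$. *)

From HB Require Import structures.
From mathcomp Require Import all_boot all_order all_algebra.
Set Implicit Arguments. Unset Strict Implicit. Unset Printing Implicit Defensive.
Import GRing.Theory Num.Theory.
Local Open Scope ring_scope.

(* Polynomial (regular) functions on the affine space k^N = 'rV[k]_N:
   the functions generated by constants and coordinates under + and *. *)
Inductive polyfun (R : fieldType) (N : nat) : ('rV[R]_N -> R) -> Prop :=
| pf_const (c : R) : polyfun (fun _ => c)
| pf_coord (i : 'I_N) : polyfun (fun v => v ord0 i)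
| pf_add f g : polyfun f -> polyfun g -> polyfun (fun v => f v + g v)
| pf_mul f g : polyfun f -> polyfun g -> polyfun (fun v => f v * g v).

Definition is_polyfun (R : fieldType) (N : nat) (F : 'rV[R]_N -> R) : Prop :=
  exists p, polyfun p /\ forall v, F v = p v.

(* Regular functions on the torus G_m = k^* : Laurent polynomials. *)
Definition regular_Gm (R : fieldType) (F : R -> R) : Prop :=
  exists (p : {poly R}) (m : nat), forall t, t != 0 -> F t = p.[t] / t ^+ m.

Definition regular_GmA (R : fieldType) (N : nat) (F : R -> 'rV[R]_N -> R) : Prop :=
  exists (p : 'rV[R]_(1 + N) -> R) (m : nat), is_polyfun p /\
    forall t x, t != 0 -> F t x = p (row_mx (const_mx t) x) / t ^+ m.

Definition biregular_Gm (R : fieldType) (a : R -> R) : Prop :=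
  [/\ forall t, t != 0 -> a t != 0, regular_Gm a &
      exists b : R -> R, [/\ forall s, s != 0 -> b s != 0, regular_Gm b,
        forall t, t != 0 -> b (a t) = t & forall s, s != 0 -> a (b s) = s]].

Definition dep_above1 (R : fieldType) (n : nat) (i : 'I_n) (F : 'rV[R]_n -> R) :=
  forall x x' : 'rV[R]_n, (forall j : 'I_n, (i < j)%N -> x ord0 j = x' ord0 j) -> F x = F x'.
Definition dep_above2 (R : fieldType) (n : nat) (i : 'I_n)
    (F : 'rV[R]_n -> 'rV[R]_n -> R) :=
  forall x x' y y' : 'rV[R]_n, (forall j : 'I_n, (i < j)%N -> x ord0 j = x' ord0 j /\ y ord0 j = y' ord0 j) ->
    F x y = F x' y'.

(* U_i = {x : x_{i+1} = ... = x_n = 0} (1-based), i.e. 0-based coords j >= i vanish. *)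
Definition inU (R : fieldType) (n : nat) (i : nat) (x : 'rV[R]_n) : Prop :=
  forall j : 'I_n, (i <= j)%N -> x ord0 j = 0.

(* The standing setting of the paper: U = k^n with triangular polynomial group law
   (identity 0), T = G_m acting by triangular automorphisms, U_i normal in G. *)
Definition setting (k : fieldType) (n : nat)
    (mul : 'rV[k]_n -> 'rV[k]_n -> 'rV[k]_n) (inv : 'rV[k]_n -> 'rV[k]_n)
    (psi : 'I_n -> 'rV[k]_n -> 'rV[k]_n -> k)
    (a : k -> k) (e : 'I_n -> int) (phi : 'I_n -> k -> 'rV[k]_n -> k)
    (act : k -> 'rV[k]_n -> 'rV[k]_n) : Prop :=
  [/\
      [/\ forall x y z, mul x (mul y z) = mul (mul x y) z,
          forall x, mul 0 x = x /\ mul x 0 = x,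
          forall x, mul x (inv x) = 0 /\ mul (inv x) x = 0,
          forall i : 'I_n, is_polyfun (fun x => inv x ord0 i) &
          forall i : 'I_n, is_polyfun (fun v : 'rV[k]_(n + n) => mul (lsubmx v) (rsubmx v) ord0 i)],
      [/\ forall x y, mul x y = \row_(i < n) (x ord0 i + y ord0 i + psi i x y),
          forall i : 'I_n, is_polyfun (fun v : 'rV[k]_(n + n) => psi i (lsubmx v) (rsubmx v)),
          forall i : 'I_n, dep_above2 i (psi i) &
          forall i : 'I_n, val i = n.-1 -> forall x y, psi i x y = 0],
      (* the U_i are normal subgroups of G = U x| T *)
      (forall i : nat, (i <= n)%N ->
        [/\ forall x y, inU i x -> inU i y -> inU i (mul x y),
            forall x, inU i x -> inU i (inv x),
            forall g x, inU i x -> inU i (mul (mul g x) (inv g)) &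
            forall t x, t != 0 -> inU i x -> inU i (act t x)]),
      [/\ biregular_Gm a,
          forall x, act 1 x = x,
          forall t s x, t != 0 -> s != 0 -> act (t * s) x = act t (act s x),
          forall t x y, t != 0 -> act t (mul x y) = mul (act t x) (act t y) &
          forall i : 'I_n, regular_GmA (fun t x => act t x ord0 i)] &
      [/\ forall t x, t != 0 -> act t x = \row_(i < n) ((a t) ^ (e i) * x ord0 i + phi i t x),
          forall t (i : 'I_n), t != 0 -> is_polyfun (phi i t),
          forall t (i : 'I_n), t != 0 -> dep_above1 i (phi i t) &
          forall t (i : 'I_n), t != 0 -> val i = n.-1 -> forall x, phi i t x = 0]].

Definition lastvec (k : fieldType) (n : nat) (t : k) : 'rV[k]_n :=
  \row_(j < n) (if val j == n.-1 then t else 0).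

Definition sect (k : fieldType) (n : nat) (f : {poly k}) (t : k) : 'rV[k]_n :=
  \row_(j < n) (if val j == 0%N then f.[t] else if val j == n.-1 then t else 0).

Definition delta1 (k : fieldType) (f : {poly k}) (x y : k) : k :=
  f.[x] + f.[y] - f.[x + y].

From HB Require Import structures.
From mathcomp Require Import all_boot all_order all_algebra.
From mathcomp Require Import ring.
From Stdlib Require Import Classical.
Import GRing.Theory Num.Theory.
Local Open Scope ring_scope.

Set Implicit Arguments. Unset Strict Implicit. Unset Printing Implicit Defensive.

(* With phi_2 = ... = phi_{n-1} = 0, the torus acts on a point
   (x_1, 0, ..., 0, x_n) by
       x_1 |-> chi0(t) x_1 + shear(t, x_n),   x_n |-> chi1(t) x_n,
   where chi0 = a^(e_1), chi1 = a^(e_n) and shear(t, -) = phi_1^(t) is additive.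
   The graph of f is then stable iff chi0(t) f(u) + shear(t, u) = f(chi1(t) u),
   i.e. iff f trivialises the cocycle shear.  Writing
   shear(t, u) = sum_d c_d(t) u^d with Laurent coefficients c_d, each c_d
   satisfies c_d(t s) = chi0(t) c_d(s) + c_d(t) chi1(s)^d, whose solutions are
   the coboundaries b_d (chi1^d - chi0): regular additive maps G_m -> G_a
   vanish, and regular characters are monomials.  Then f = sum_d b_d X^d, and
   f is additive because b_d is nonzero only where u |-> u^d is additive. *)

Section PolynomialIdentities.
Variable k : closedFieldType.

(* An algebraically closed field is infinite: no finite list exhausts it,
   since the polynomial prod_(b in s) (X - b) + 1 has a root outside s. *)
Lemma closed_field_fresh (s : seq k) : exists x, x \notin s.
Proof.
case: s => [|b s]; first by exists 0.
pose p := \prod_(c <- b :: s) ('X - c%:P) + 1.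
have p_nconst : size p != 1%N.
  by rewrite /p size_polyDl ?size_prod_XsubC ?size_poly1.
have [x px0] := closed_rootP p p_nconst.
exists x; apply/negP => xs; move: px0.
rewrite /root /p hornerD horner_prod hornerC (big_rem x xs) /=.
by rewrite hornerXsubC subrr mul0r add0r oner_eq0.
Qed.

Lemma distinct_units (N : nat) : exists s : seq k, [/\ uniq s, size s = N & 0 \notin s].
Proof.
elim: N => [|N [s [us ss s0]]]; first by exists [::].
have [x] := closed_field_fresh (0 :: s); rewrite inE negb_or => /andP[x0 xs].
by exists (x :: s); rewrite /= xs us ss inE negb_or eq_sym x0 s0.
Qed.

Lemma poly_eq0_on_units (p : {poly k}) : (forall x, x != 0 -> p.[x] = 0) -> p = 0.
Proof.
move=> p_units; apply/eqP/negPn/negP => p_neq0.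
have [s [us ss s0]] := distinct_units (size p).
suff: all (root p) s by move/(max_poly_roots p_neq0)/(_ us); rewrite ss ltnn.
by apply/allP => x xs; apply/rootP/p_units; apply: contraNneq s0 => <-.
Qed.

Lemma coef_eq0_on_units (N : nat) (w : nat -> k) :
  (forall u, u != 0 -> \sum_(d < N) w d * u ^+ d = 0) ->
  forall d, (d < N)%N -> w d = 0.
Proof.
move=> w_units d dN.
have /polyP/(_ d) : \poly_(i < N) w i = 0.
  by apply: poly_eq0_on_units => u u0; rewrite horner_poly w_units.
by rewrite coef_poly dN coef0.
Qed.

End PolynomialIdentities.

Section RegularFunctionsOnTorus.
Variable k : closedFieldType.
Implicit Types (F G chi q : k -> k).

Lemma regular_Gm_mul F G : regular_Gm F -> regular_Gm G -> regular_Gm (fun t => F t * G t).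
Proof.
move=> [p [m Fp]] [q [l Gq]]; exists (p * q), (m + l)%N => t t0.
by rewrite Fp // Gq // hornerM exprD invfM mulrACA.
Qed.

(* A regular character of G_m is a monomial t^j, so its inverse is regular
   too.  Indeed chi = R(t)/t^m with R multiplicative on k^*, and comparing the
   top coefficients of R(s t) = R(s) R(t) in t gives R(s) = s^(deg R). *)
Lemma regular_character_inv chi :
  regular_Gm chi -> (forall t s, t != 0 -> s != 0 -> chi (t * s) = chi t * chi s) ->
  chi 1 != 0 -> regular_Gm (fun t => (chi t)^-1).
Proof.
move=> [R [m chiR]] chiM chi1.
have RM t s : t != 0 -> s != 0 -> R.[s * t] = R.[s] * R.[t].
  move=> t0 s0; have st0 : s * t != 0 by rewrite mulf_neq0.
  rewrite -[R.[s * t]](@divfK _ ((s * t) ^+ m)) ?expf_neq0 //.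
  by rewrite -chiR // chiM // !chiR // exprMn mulrACA !divfK ?expf_neq0.
have R_neq0 : R != 0.
  by apply: contraNneq chi1 => R0; rewrite chiR ?oner_eq0 // R0 horner0 mul0r.
have lcR : lead_coef R != 0 by rewrite lead_coef_eq0.
have R_monomial s : s != 0 -> R.[s] = s ^+ (size R).-1.
  move=> s0; pose D := \poly_(i < size R) (R`_i * s ^+ i) - R.[s] *: R.
  have /polyP/(_ (size R).-1) : D = 0.
    apply: poly_eq0_on_units => t t0; rewrite /D hornerD hornerN hornerZ horner_poly.
    rewrite -RM // (horner_coef R (s * t)); apply/eqP; rewrite subr_eq0; apply/eqP.
    by apply: eq_bigr => i _; rewrite exprMn mulrA.
  rewrite /D coefD coefN coefZ coef_poly coef0 prednK ?size_poly_gt0 // leqnn.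
  by move/eqP; rewrite subr_eq0 -/(lead_coef R) mulrC => /eqP/esym/(mulIf lcR).
exists 'X^m, (size R).-1 => t t0.
by rewrite chiR // R_monomial // hornerXn invf_div.
Qed.

(* A regular additive map G_m -> G_a is trivial: the identity
   q(t s) = q(t) + q(s) for q = P(t)/t^m forces P(s t) = s^m P(t) + q(s) s^m t^m,
   and the coefficient of t^m on both sides gives q(s) = 0. *)
Lemma regular_additive_eq0 q :
  regular_Gm q -> (forall t s, t != 0 -> s != 0 -> q (t * s) = q t + q s) ->
  forall s, s != 0 -> q s = 0.
Proof.
move=> [P [m qP]] qadd s s0.
pose N := maxn (size P) m.+1.
pose D := \poly_(j < N) (P`_j * s ^+ j) - s ^+ m *: P - (q s * s ^+ m) *: 'X^m.
have PE t : t != 0 -> P.[t * s] = s ^+ m * P.[t] + q s * s ^+ m * t ^+ m.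
  move=> t0; have ts0 : t * s != 0 by rewrite mulf_neq0.
  rewrite -[P.[t * s]](@divfK _ ((t * s) ^+ m)) ?expf_neq0 //.
  rewrite -qP // qadd // qP // exprMn mulrDl mulrA divfK ?expf_neq0 //.
  by rewrite [P.[t] * _]mulrC [t ^+ m * _]mulrC mulrA.
have /polyP/(_ m) : D = 0.
  apply: poly_eq0_on_units => t t0.
  rewrite /D !hornerD !hornerN !hornerZ hornerXn horner_poly.
  rewrite -addrA -opprD -(PE t t0) (@horner_coef_wide _ N) ?leq_maxl //.
  apply/eqP; rewrite subr_eq0; apply/eqP.
  by apply: eq_bigr => i _; rewrite exprMn [t ^+ i * _]mulrC mulrA.
rewrite /D !coefD !coefN !coefZ coef_poly coefXn eqxx leq_maxr coef0.
rewrite [P`_m * _]mulrC subrr sub0r mulr1 => /eqP; rewrite oppr_eq0 mulf_eq0.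
by rewrite expf_eq0 (negPf s0) andbF orbF => /eqP.
Qed.

End RegularFunctionsOnTorus.

Section AdditiveCocycles.
Variable k : closedFieldType.

Lemma poly_of_coef_choice (N : nat) (P : nat -> k -> Prop) :
  (forall d, (d < N)%N -> exists b, P d b) ->
  exists f : {poly k}, (size f <= N)%N /\ forall d, (d < N)%N -> P d f`_d.
Proof.
elim: N => [|N IHN] choiceP; first by exists 0; rewrite size_poly0.
have [f [size_f Pf]] := IHN (fun d dN => choiceP d (leqW dN)).
have [b Pb] := choiceP N (ltnSn N).
exists (f + b *: 'X^N); split.
  rewrite (leq_trans (size_polyD _ _)) // geq_max (leq_trans size_f) //=.
  by rewrite (leq_trans (size_scale_leq _ _)) // size_polyXn.
move=> d; rewrite ltnS leq_eqVlt => /predU1P[->|dN].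
  by rewrite coefD coefZ coefXn eqxx mulr1 nth_default ?add0r.
by rewrite coefD coefZ coefXn (ltn_eqF dN) mulr0 addr0; apply: Pf.
Qed.

(* If
   beta differs from alpha at some t0, b = c(t0) / (beta(t0) - alpha(t0)) by
   symmetry of the equation in t and s; otherwise c / alpha is a regular
   additive map G_m -> G_a, hence zero. *)
Lemma cocycle_coboundary (alpha beta c : k -> k) :
  (forall t, t != 0 -> alpha t != 0) ->
  (forall t s, t != 0 -> s != 0 -> alpha (t * s) = alpha t * alpha s) ->
  regular_Gm alpha -> regular_Gm c ->
  (forall t s, t != 0 -> s != 0 -> c (t * s) = alpha t * c s + c t * beta s) ->
  exists b, (forall s, s != 0 -> c s = b * (beta s - alpha s)) /\
            (b != 0 -> exists2 t, t != 0 & c t != 0).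
Proof.
move=> alpha_neq0 alphaM alpha_reg c_reg c_cocycle.
case: (classic (exists2 t0, t0 != 0 & beta t0 != alpha t0)) => [[t0 t00 beta_t0]|alpha_beta].
  have D_neq0 : beta t0 - alpha t0 != 0 by rewrite subr_eq0.
  exists (c t0 / (beta t0 - alpha t0)); split; last first.
    by move=> b_neq0; exists t0 => //; apply: contraNneq b_neq0 => ->; rewrite mul0r.
  move=> s s0; suff c_sym : c s * (beta t0 - alpha t0) = c t0 * (beta s - alpha s).
    by rewrite mulrAC -c_sym mulfK.
  have := c_cocycle s t0 s0 t00; rewrite mulrC c_cocycle // => c_swap.
  apply/eqP; rewrite -subr_eq0; apply/eqP; transitivity
    (alpha s * c t0 + c s * beta t0 - (alpha t0 * c s + c t0 * beta s)); first by ring.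
  by rewrite c_swap subrr.
have beta_alpha t : t != 0 -> beta t = alpha t.
  by move=> t0; apply: NNPP => /eqP beta_t; apply: alpha_beta; exists t.
exists 0; split=> [s s0|]; last by rewrite eqxx.
pose q t := c t * (alpha t)^-1.
have q_reg : regular_Gm q.
  apply: regular_Gm_mul c_reg (regular_character_inv alpha_reg alphaM _).
  exact: alpha_neq0 (oner_neq0 k).
have q_add t t' : t != 0 -> t' != 0 -> q (t * t') = q t + q t'.
  move=> t0 t'0; rewrite /q c_cocycle // alphaM // beta_alpha // invfM.
  by field; rewrite !alpha_neq0.
have := regular_additive_eq0 q_reg q_add s0; rewrite /q mul0r => /eqP.
by rewrite mulf_eq0 invr_eq0 (negPf (alpha_neq0 s s0)) orbF => /eqP.
Qed.

(* The standing data of the key proposition: a regular character alpha of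
   G_m, a function beta, and a family of additive polynomial maps g(t, -)
   with regular coefficients c_d(t), satisfying the cocycle identity of a
   G_m-action on G_a x G_a twisted by (alpha, beta). *)
Section Cocycle.
Variables (alpha beta : k -> k) (g : k -> k -> k) (N : nat) (c : nat -> k -> k).
Hypothesis alpha_neq0 : forall t, t != 0 -> alpha t != 0.
Hypothesis alphaM : forall t s, t != 0 -> s != 0 -> alpha (t * s) = alpha t * alpha s.
Hypothesis alpha_reg : regular_Gm alpha.
Hypothesis c_reg : forall d, regular_Gm (c d).
Hypothesis g_expand : forall t u, t != 0 -> g t u = \sum_(d < N) c d t * u ^+ d.
Hypothesis g_add : forall t u v, t != 0 -> g t (u + v) = g t u + g t v.
Hypothesis g_cocycle : forall t s u, t != 0 -> s != 0 ->
  g (t * s) u = alpha t * g s u + g t (beta s * u).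

Lemma coef_cocycle d t s : (d < N)%N -> t != 0 -> s != 0 ->
  c d (t * s) = alpha t * c d s + c d t * beta s ^+ d.
Proof.
move=> dN t0 s0; apply/eqP; rewrite -subr_eq0 opprD addrA; apply/eqP; move: d dN.
apply: coef_eq0_on_units => u u0.
transitivity (g (t * s) u - alpha t * g s u - g t (beta s * u)).
  rewrite !g_expand ?mulf_neq0 // mulr_sumr -!sumrB; apply: eq_bigr => d _.
  by rewrite exprMn; ring.
by rewrite g_cocycle //; ring.
Qed.

Lemma coef_additive d t x y : (d < N)%N -> t != 0 ->
  c d t * ((x + y) ^+ d - x ^+ d - y ^+ d) = 0.
Proof.
move=> dN t0; move: d dN; apply: coef_eq0_on_units => l l0.
transitivity (g t (l * x + l * y) - g t (l * x) - g t (l * y)).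
  rewrite -mulrDr !g_expand // -!sumrB; apply: eq_bigr => d _.
  by rewrite !exprMn; ring.
by rewrite g_add //; ring.
Qed.

(* Key proposition: the cocycle g is the coboundary of an additive
   polynomial f, i.e. alpha(t) f(u) + g(t, u) = f(beta(t) u).  Its d-th
   coefficient is the b_d with c_d = b_d (beta^d - alpha). *)
Theorem additive_cocycle_coboundary : exists f : {poly k},
  (forall x y, delta1 f x y = 0) /\
  (forall t u, t != 0 -> alpha t * f.[u] + g t u = f.[beta t * u]).
Proof.
have [f [size_f f_coef]] := poly_of_coef_choice (fun d (dN : (d < N)%N) =>
  cocycle_coboundary (beta := fun s => beta s ^+ d)
    alpha_neq0 alphaM alpha_reg (c_reg d) (fun t s => coef_cocycle dN)).
have f_horner u : f.[u] = \sum_(d < N) f`_d * u ^+ d by exact: horner_coef_wide.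
exists f; split=> [x y|t u t0]; last first.
  rewrite g_expand // !f_horner mulr_sumr -big_split /=; apply: eq_bigr => d _.
  by rewrite (f_coef d (ltn_ord d)).1 // exprMn; ring.
have f_add d : (d < N)%N -> f`_d * ((x + y) ^+ d - x ^+ d - y ^+ d) = 0.
  move=> dN; have [->|/(f_coef d dN).2 [t t0 ct_neq0]] := eqVneq f`_d 0; first exact: mul0r.
  have /eqP := coef_additive x y dN t0.
  by rewrite mulf_eq0 (negPf ct_neq0) => /eqP ->; rewrite mulr0.
rewrite /delta1 !f_horner -big_split -sumrB /=; apply: big1 => d _.
transitivity (- (f`_d * ((x + y) ^+ d - x ^+ d - y ^+ d))); first by ring.
by rewrite f_add ?oppr0.
Qed.

End Cocycle.
End AdditiveCocycles.

Section RegularFunctionsOnGmA.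
Variables (k : closedFieldType) (n : nat).
Implicit Types (F : k -> 'rV[k]_n -> k) (y : 'rV[k]_n).

Lemma polyfun_on_line (p : 'rV[k]_(1 + n) -> k) y : polyfun p ->
  exists Q : {poly {poly k}}, forall t u, p (row_mx (const_mx t) (u *: y)) = (Q.[u%:P]).[t].
Proof.
elim=> [c|i|f g _ [Qf Hf] _ [Qg Hg]|f g _ [Qf Hf] _ [Qg Hg]].
- by exists c%:P%:P => t u; rewrite !hornerC.
- case: (split i) (splitK i) => j <- /=.
    by exists 'X%:P => t u; rewrite row_mxEl mxE hornerC hornerX.
  exists ((y ord0 j)%:P%:P * 'X) => t u.
  by rewrite row_mxEr mxE hornerMX hornerC -polyCM hornerC mulrC.
- by exists (Qf + Qg) => t u; rewrite Hf Hg !hornerD.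
- by exists (Qf * Qg) => t u; rewrite Hf Hg !hornerM.
Qed.

Lemma regular_GmA_on_line F y : regular_GmA F ->
  exists (Q : {poly {poly k}}) (M : nat),
    forall t u, t != 0 -> F t (u *: y) = (Q.[u%:P]).[t] / t ^+ M.
Proof.
move=> [p [M [[p' [p'_poly pE]] Fp]]]; have [Q pQ] := polyfun_on_line y p'_poly.
by exists Q, M => t u t0; rewrite Fp // pE pQ.
Qed.

Lemma regular_GmA_point F y : regular_GmA F -> regular_Gm (fun t => F t y).
Proof.
move=> /(regular_GmA_on_line y) [Q [M FQ]].
by exists Q.[1%:P], M => t t0; rewrite -FQ // scale1r.
Qed.

Lemma regular_GmA_expand F y : regular_GmA F ->
  exists (N : nat) (c : nat -> k -> k), (forall d, regular_Gm (c d)) /\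
    forall t u, t != 0 -> F t (u *: y) = \sum_(d < N) c d t * u ^+ d.
Proof.
move=> /(regular_GmA_on_line y) [Q [M FQ]].
exists (size Q), (fun d t => (Q`_d).[t] / t ^+ M); split=> [d|t u t0].
  by exists Q`_d, M.
rewrite FQ // (horner_coef Q) horner_sum mulr_suml; apply: eq_bigr => d _.
by rewrite hornerM -rmorphXn hornerC mulrAC.
Qed.

End RegularFunctionsOnGmA.

Section TriangularAction.
Variables (k : closedFieldType) (m : nat).
Local Notation n := m.+2.
Variables (mul : 'rV[k]_n -> 'rV[k]_n -> 'rV[k]_n) (inv : 'rV[k]_n -> 'rV[k]_n)
  (psi : 'I_n -> 'rV[k]_n -> 'rV[k]_n -> k) (a : k -> k) (e : 'I_n -> int)
  (phi : 'I_n -> k -> 'rV[k]_n -> k) (act : k -> 'rV[k]_n -> 'rV[k]_n).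
Hypothesis act_setting : setting mul inv psi a e phi act.
Hypothesis phi_mid : forall (t : k) (i : 'I_n), t != 0 -> (0 < val i < n.-1)%N ->
  forall x, phi i t x = 0.
Hypothesis phi_first_last : forall (t : k) (i : 'I_n), t != 0 -> val i = 0%N ->
  forall x x' : 'rV[k]_n, (forall j : 'I_n, val j = n.-1 -> x ord0 j = x' ord0 j) ->
  phi i t x = phi i t x'.
Hypothesis phi_first_add : forall (t : k) (i : 'I_n), t != 0 -> val i = 0%N -> forall u v,
  phi i t (lastvec n (u + v)) = phi i t (lastvec n u) + phi i t (lastvec n v).

Definition chi0 (t : k) : k := a t ^ e ord0.
Definition chi1 (t : k) : k := a t ^ e ord_max.
Definition shear (t u : k) : k := phi ord0 t (lastvec n u).

Lemma lastvec_last (u : k) : lastvec n u ord0 ord_max = u.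
Proof. by rewrite mxE eqxx. Qed.

Lemma lastvec_first (u : k) : lastvec n u ord0 ord0 = 0.
Proof. by rewrite mxE. Qed.

Lemma lastvecZ (u : k) : lastvec n u = u *: lastvec n 1.
Proof. by apply/rowP => j; rewrite !mxE; case: ifP; rewrite ?mulr1 ?mulr0. Qed.

Lemma act_first t x : t != 0 ->
  act t x ord0 ord0 = chi0 t * x ord0 ord0 + shear t (x ord0 ord_max).
Proof.
case: act_setting => _ _ _ _ [actE _ _ _] t0; rewrite actE // mxE.
congr (_ + _); apply: phi_first_last => // j /= jlast.
by rewrite (_ : j = ord_max) ?lastvec_last //; apply/val_inj.
Qed.

Lemma act_last t x : t != 0 -> act t x ord0 ord_max = chi1 t * x ord0 ord_max.
Proof.
by case: act_setting => _ _ _ _ [actE _ _ phi_last] t0; rewrite actE // mxE phi_last ?addr0.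
Qed.

Lemma act_mid t x (j : 'I_n) : t != 0 -> (0 < j < m.+1)%N ->
  act t x ord0 j = a t ^ e j * x ord0 j.
Proof.
by case: act_setting => _ _ _ _ [actE _ _ _] t0 jmid; rewrite actE // mxE phi_mid ?addr0.
Qed.

Lemma act_comp t s x : t != 0 -> s != 0 -> act (t * s) x = act t (act s x).
Proof. by case: act_setting => _ _ _ [_ _ actM _ _] _; apply: actM. Qed.

Lemma chi0_neq0 t : t != 0 -> chi0 t != 0.
Proof.
by case: act_setting => _ _ _ [[a_neq0 _ _] _ _ _ _] _ t0; rewrite expfz_neq0 ?a_neq0.
Qed.

Lemma shear_add t u v : t != 0 -> shear t (u + v) = shear t u + shear t v.
Proof. by move=> t0; apply: phi_first_add. Qed.

Lemma shear0 t : t != 0 -> shear t 0 = 0.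
Proof.
by move=> t0; apply: (addrI (shear t 0)); rewrite -shear_add // !addr0.
Qed.

(* The shear is a cocycle: this is the first coordinate of act (t s) = act t o act s
   evaluated on the last-coordinate line. *)
Lemma shear_cocycle t s u : t != 0 -> s != 0 ->
  shear (t * s) u = chi0 t * shear s u + shear t (chi1 s * u).
Proof.
move=> t0 s0; have := act_first (lastvec n u) (mulf_neq0 t0 s0).
rewrite act_comp // act_first // act_first // act_last // !lastvec_first !lastvec_last.
by rewrite !mulr0 !add0r => <-.
Qed.

(* chi0 is a regular character: it is the first coordinate of the orbit of
   the first basis vector e_1. *)
Lemma act_first_basis t : t != 0 -> act t (delta_mx 0 0) ord0 ord0 = chi0 t.
Proof. by move=> t0; rewrite act_first // !mxE /= mulr1 shear0 ?addr0. Qed.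

Lemma chi0M t s : t != 0 -> s != 0 -> chi0 (t * s) = chi0 t * chi0 s.
Proof.
move=> t0 s0; rewrite -act_first_basis ?mulf_neq0 // act_comp // act_first //.
by rewrite act_first_basis // act_last // !mxE /= mulr0 shear0 ?addr0.
Qed.

Lemma chi0_regular : regular_Gm chi0.
Proof.
case: act_setting => _ _ _ [_ _ _ _ act_reg] _.
have [p [M chi0p]] := regular_GmA_point (delta_mx 0 0) (act_reg ord0).
by exists p, M => t t0; rewrite -act_first_basis // chi0p.
Qed.

Lemma shear_expand : exists (N : nat) (c : nat -> k -> k), (forall d, regular_Gm (c d)) /\
  forall t u, t != 0 -> shear t u = \sum_(d < N) c d t * u ^+ d.
Proof.
case: act_setting => _ _ _ [_ _ _ _ act_reg] _.
have [N [c [c_reg act_line]]] := regular_GmA_expand (lastvec n 1) (act_reg ord0).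
exists N, c; split=> // t u t0; rewrite -act_line // -lastvecZ act_first //.
by rewrite lastvec_first lastvec_last mulr0 add0r.
Qed.

Lemma act_sect (f : {poly k}) t u : t != 0 ->
  chi0 t * f.[u] + shear t u = f.[chi1 t * u] ->
  act t (sect n f u) = sect n f (chi1 t * u).
Proof.
move=> t0 f_untwist; apply/rowP => j; rewrite [RHS]mxE.
have [j0|j_neq0] := eqVneq (val j) 0%N.
  have -> : j = ord0 by apply: val_inj.
  by rewrite act_first // !mxE /= eqxx -f_untwist.
have [jlast|j_neq_last] := eqVneq (val j) m.+1.
  have -> : j = ord_max by apply: val_inj.
  by rewrite act_last // !mxE /= eqxx.
rewrite act_mid ?mxE ?(negPf j_neq0) ?(negPf j_neq_last) ?mulr0 //.
by rewrite lt0n j_neq0 ltn_neqAle j_neq_last -ltnS ltn_ord.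
Qed.

Theorem stable_additive_section : exists f : {poly k},
  (forall x y, delta1 f x y = 0) /\
  (forall t : k, t != 0 -> forall u, exists u', act t (sect n f u) = sect n f u').
Proof.
have [N [c [c_reg shearE]]] := shear_expand.
have [f [f_add f_untwist]] := additive_cocycle_coboundary chi0_neq0 chi0M chi0_regular
  c_reg shearE shear_add shear_cocycle.
by exists f; split=> // t t0 u; exists (chi1 t * u); apply: act_sect; rewrite ?f_untwist.
Qed.

End TriangularAction.

Unset Implicit Arguments. Set Strict Implicit.

Theorem mainTheorem8 (k : closedFieldType) (n : nat) (hn : (2 <= n)%N)
    (mul : 'rV[k]_n -> 'rV[k]_n -> 'rV[k]_n) (inv : 'rV[k]_n -> 'rV[k]_n)
    (psi : 'I_n -> 'rV[k]_n -> 'rV[k]_n -> k)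
    (a : k -> k) (e : 'I_n -> int) (phi : 'I_n -> k -> 'rV[k]_n -> k)
    (act : k -> 'rV[k]_n -> 'rV[k]_n) :
  setting mul inv psi a e phi act ->
  (forall (t : k) (i : 'I_n), t != 0 -> (0 < val i < n.-1)%N -> forall x, phi i t x = 0) ->
  (forall (t : k) (i : 'I_n), t != 0 -> val i = 0%N ->
     forall x x' : 'rV[k]_n, (forall j : 'I_n, val j = n.-1 -> x ord0 j = x' ord0 j) ->
     phi i t x = phi i t x') ->
  (forall (t : k) (i : 'I_n), t != 0 -> val i = 0%N -> forall u v,
     phi i t (lastvec n (u + v)) = phi i t (lastvec n u) + phi i t (lastvec n v)) ->
  exists f : {poly k},
    (forall x y, delta1 f x y = 0) /\
    (forall t : k, t != 0 -> forall u, exists u', act t (sect n f u) = sect n f u').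
Proof.
move: mul inv psi e phi act; case: n hn => [|[|m]] // _ mul inv psi e phi act.
exact: stable_additive_section.
Qed.
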